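(* There is a constant $c$ such that, as $n\to\infty$, the fraction of Boolean $n\times n$ matrices $A$ for which the size of a smallest cancellation-free linear circuit computing $A$ is at most $c$ times the size of a smallest linear circuit computing $A$ tends to $1$. That is, for almost every matrix the cancellation ratio is bounded by a constant.
   Context: A linear circuit over $\mathbb{F}_2$ with inputs $x_1,\ldots,x_n$ is a directed acyclic graph whose in-degree-0 nodes are the inputs and whose other nodes (gates) have in-degree 2 and compute the XOR of their two children; $n$ nodes are designated as outputs $y_1,\ldots,y_n$, and the circuit computes $A$ if $\mathbf{y}=A\mathbf{x}$ for all $\mathbf{x}\in\mathbb{F}_2^n$. The size is the number of gates. The value vector $\kappa(u)\in\mathbb{F}_2^n$ of a node $u$ has $\kappa(u)_i=1$ iff $x_i$ occurs in the parity computed at $u$. A linear circuit is cancellation-free if whenever there is a directed path from a node $w$ to a node $u$, $\kappa(u)\geq\kappa(w)$ coordinatewise. The cancellation ratio of a matrix is the ratio between the size of a smallest cancellation-free linear circuit computing it and the size of a smallest linear circuit computing it. *)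

From Stdlib Require Import Relations.
From mathcomp Require Import all_boot all_order all_algebra.
Set Implicit Arguments. Unset Strict Implicit. Unset Printing Implicit Defensive.
Import Order.TTheory GRing.Theory Num.Theory.
Local Open Scope ring_scope.

(* Nodes are numbered by nat: nodes
   0 .. n-1 are the inputs x_1..x_n, node n+k is the k-th gate
   (a topological numbering, which every DAG admits).  Gate k is the pair
   of its two (distinct) children, both of which must be earlier nodes.
   [outs i] is the node designated as output y_(i+1). *)
Record circuit (n : nat) := Circuit {
  gates : seq (nat * nat);
  outs : 'I_n -> nat
}.

Definition wf_circuit n (C : circuit n) : Prop :=
  (forall k, (k < size (gates C))%N ->
     let g := nth (0%N, 0%N) (gates C) k in
     [/\ (g.1 < n + k)%N, (g.2 < n + k)%N & g.1 != g.2]) /\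
  (forall i, (outs C i < n + size (gates C))%N).

Definition csize n (C : circuit n) : nat := size (gates C).

Definition node_vals (V : zmodType) (init : seq V) (gs : seq (nat * nat)) : seq V :=
  foldl (fun vs g => rcons vs (nth 0 vs g.1 + nth 0 vs g.2)) init gs.

Definition eval n (C : circuit n) (x : 'cV['F_2]_n) (u : nat) : 'F_2 :=
  nth 0 (node_vals [seq x i 0 | i <- enum 'I_n] (gates C)) u.

Definition kappa n (C : circuit n) (u : nat) : 'rV['F_2]_n :=
  nth 0 (node_vals [seq delta_mx 0 i | i <- enum 'I_n] (gates C)) u.

Definition computes n (C : circuit n) (A : 'M['F_2]_n) : Prop :=
  wf_circuit C /\
  forall (x : 'cV['F_2]_n) (i : 'I_n), eval C x (outs C i) = (A *m x) i 0.

Definition cedge n (C : circuit n) (w u : nat) : Prop :=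
  exists k, [/\ (k < size (gates C))%N, u = (n + k)%N &
    (w = (nth (0%N, 0%N) (gates C) k).1 \/ w = (nth (0%N, 0%N) (gates C) k).2)].

Definition reaches n (C : circuit n) : relation nat := clos_refl_trans nat (cedge C).

Definition cancellation_free n (C : circuit n) : Prop :=
  forall w u, reaches C w u ->
    forall j : 'I_n, kappa C w 0 j = 1 -> kappa C u 0 j = 1.

Definition ratio_at_most n (c : nat) (A : 'M['F_2]_n) : Prop :=
  exists C : circuit n, [/\ computes C A, cancellation_free C &
    forall D : circuit n, computes D A -> (csize C <= c * csize D)%N].

(* Every matrix without a zero row is computed by a cancellation-free circuit
   of Lupanov type: split the columns into blocks of k ~ (log n)/2 columns,
   form the union of every subset of every block by a chain of gates, then
   assemble each row from its at most n/k nonempty block pieces.  This uses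
   O(n^2/log n) gates, and since all the unions are disjoint, every node
   computes the indicator vector of a set, so no cancellation occurs.
   Conversely, a circuit with s gates is described by O(s log(n+s)) bits,
   so at most a 2^-n fraction of the 2^(n^2) matrices are computed with
   s = n^2/(8 (log n + 1)) gates, and only an (n+1) 2^-n fraction has a
   zero row.  Hence for almost all matrices both optima are Theta(n^2/log n)
   and their ratio is at most 72. *)
From mathcomp Require Import all_boot all_order all_algebra.
From mathcomp Require Import zify lra.
Import Order.TTheory GRing.Theory Num.Theory.

Set Implicit Arguments.
Unset Strict Implicit.
Unset Printing Implicit Defensive.

Section Evaluation.
Local Open Scope ring_scope.

Lemma nth_map0 (V W : zmodType) (f : V -> W) (s : seq V) i :
  f 0 = 0 -> nth 0 (map f s) i = f (nth 0 s i).
Proof.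
move=> f0; case: (ltnP i (size s)) => Hi; first by rewrite (nth_map 0).
by rewrite !nth_default ?size_map.
Qed.

Lemma node_vals_map (V W : zmodType) (f : V -> W) init gs :
  f 0 = 0 -> {morph f : a b / a + b} ->
  map f (node_vals init gs) = node_vals (map f init) gs.
Proof.
move=> f0 fD; elim: gs init => [|g gs IH] init //=.
by rewrite /node_vals /= -!/(node_vals _ _) IH map_rcons fD !nth_map0.
Qed.

Lemma eval_kappa n (C : circuit n) x u : eval C x u = (kappa C u *m x) 0 0.
Proof.
pose f (v : 'rV['F_2]_n) := (v *m x) 0 0.
have f0 : f 0 = 0 by rewrite /f mul0mx mxE.
have fD : {morph f : a b / a + b} by move=> a b; rewrite /f mulmxDl mxE.
rewrite /eval /kappa -[RHS]/(f _) -(nth_map0 _ _ f0) node_vals_map //.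
congr (nth _ (node_vals _ _) _); rewrite -[in RHS]map_comp enumT.
by apply: eq_map => i; rewrite /f /= -rowE mxE.
Qed.

End Evaluation.

Lemma F2_eq0_or1 (a : 'F_2) : a = 0%R \/ a = 1%R.
Proof. by case: a => [[|[|m]] Hm] //; [left | right]; apply: val_inj. Qed.

(* A set program over the input sets [L] adds, for each pair (A, B), a node
   computing the union A :|: B of two disjoint nodes already present. *)
Section SetPrograms.
Variable n : nat.
Implicit Types (T A B : {set 'I_n}) (L : seq {set 'I_n}).
Notation program := (seq ({set 'I_n} * {set 'I_n})).
Local Open Scope ring_scope.

Definition vec_of_set T : 'rV['F_2]_n := \row_j (j \in T)%:R.

Lemma vec_of_set1 i : vec_of_set [set i] = delta_mx 0 i.
Proof. by apply/rowP => j; rewrite !mxE in_set1 eq_sym. Qed.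

Lemma vec_of_set0 : vec_of_set set0 = 0.
Proof. by apply/rowP => j; rewrite !mxE in_set0. Qed.

Lemma vec_of_setU A B :
  [disjoint A & B] -> vec_of_set (A :|: B) = vec_of_set A + vec_of_set B.
Proof.
move=> dAB; apply/rowP => j; rewrite !mxE in_setU.
case: (boolP (j \in A)) => jA; case: (boolP (j \in B)) => jB //=.
- by move: (disjointFr dAB jA); rewrite jB.
- by rewrite addr0.
- by rewrite add0r.
- by rewrite addr0.
Qed.

Lemma vec_of_set_eq1 T j : (vec_of_set T 0 j == 1) = (j \in T).
Proof. by rewrite mxE; case: (j \in T); rewrite ?eqxx // eq_sym oner_eq0. Qed.

Fixpoint sp_nodes L (ps : program) : seq {set 'I_n} :=
  if ps is p :: ps' then sp_nodes (rcons L (p.1 :|: p.2)) ps' else L.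

Fixpoint sp_gates L (ps : program) : seq (nat * nat) :=
  if ps is p :: ps' then
    (index p.1 L, index p.2 L) :: sp_gates (rcons L (p.1 :|: p.2)) ps'
  else [::].

Fixpoint sp_valid L (ps : program) : Prop :=
  if ps is p :: ps' then
    [/\ p.1 \in L, p.2 \in L, p.1 != p.2, [disjoint p.1 & p.2] &
        sp_valid (rcons L (p.1 :|: p.2)) ps']
  else True.

Lemma sp_nodes_prefix L ps : exists t, sp_nodes L ps = L ++ t.
Proof.
elim: ps L => [|p ps IH] L /=; first by exists [::]; rewrite cats0.
have [t ->] := IH (rcons L (p.1 :|: p.2)); exists ((p.1 :|: p.2) :: t).
by rewrite -cats1 -catA.
Qed.

Lemma size_sp_nodes L ps : size (sp_nodes L ps) = (size L + size ps)%N.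
Proof.
elim: ps L => [|p ps IH] L /=; first by rewrite addn0.
by rewrite IH size_rcons addSnnS.
Qed.

Lemma size_sp_gates L ps : size (sp_gates L ps) = size ps.
Proof. by elim: ps L => [|p ps IH] L //=; rewrite IH. Qed.

Lemma mem_sp_nodes L ps T : T \in L -> T \in sp_nodes L ps.
Proof. by have [t ->] := sp_nodes_prefix L ps; rewrite mem_cat => ->. Qed.

Lemma nth_sp_nodes L ps i :
  (i < size L)%N -> nth set0 (sp_nodes L ps) i = nth set0 L i.
Proof. by have [t ->] := sp_nodes_prefix L ps; rewrite nth_cat => ->. Qed.

Lemma sp_nodes_cat L ps1 ps2 :
  sp_nodes L (ps1 ++ ps2) = sp_nodes (sp_nodes L ps1) ps2.
Proof. by elim: ps1 L => [|p ps IH] L //=. Qed.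

Lemma sp_valid_cat L ps1 ps2 :
  sp_valid L ps1 -> sp_valid (sp_nodes L ps1) ps2 -> sp_valid L (ps1 ++ ps2).
Proof.
elim: ps1 L => [|p ps IH] L //= [h1 h2 h3 h4 h5] h6; split => //.
exact: IH.
Qed.

Lemma sp_node_vals L ps : sp_valid L ps ->
  node_vals (map vec_of_set L) (sp_gates L ps) = map vec_of_set (sp_nodes L ps).
Proof.
elim: ps L => [|p ps IH] L //= [h1 h2 h3 h4 h5].
rewrite /node_vals /= -/(node_vals _ _) -IH //.
by rewrite !(nth_map set0) ?index_mem // !nth_index // -vec_of_setU // map_rcons.
Qed.

Lemma sp_gatesP L ps : sp_valid L ps -> forall k, (k < size ps)%N ->
  let g := nth (0%N, 0%N) (sp_gates L ps) k in
  [/\ (g.1 < size L + k)%N, (g.2 < size L + k)%N, g.1 != g.2 &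
      nth set0 (sp_nodes L ps) (size L + k) =
        nth set0 (sp_nodes L ps) g.1 :|: nth set0 (sp_nodes L ps) g.2].
Proof.
elim: ps L => [|p ps IH] L //= [h1 h2 h3 h4 h5] [|k] Hk /=.
  rewrite addn0 !index_mem h1 h2; split => //.
    apply: contra h3 => /eqP E; apply/eqP.
    by rewrite -(nth_index set0 h1) E nth_index.
  rewrite !nth_sp_nodes ?size_rcons ?ltnS ?index_size //.
  by rewrite -cats1 !nth_cat !index_mem h1 h2 ltnn subnn /= !nth_index.
have [a b c d] := IH _ h5 k Hk.
by rewrite size_rcons addSnnS in a b d *.
Qed.

End SetPrograms.

Definition singletons n := [seq [set i] | i <- enum 'I_n].
Definition rowset n (A : 'M['F_2]_n) i := [set j | A i j == 1%R].

Lemma vec_of_rowset n (A : 'M['F_2]_n) i : vec_of_set (rowset A i) = row i A.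
Proof. by apply/rowP => j; rewrite !mxE in_set; case: (F2_eq0_or1 (A i j)) => ->. Qed.

(* Every node of the compiled circuit holds the indicator vector of its set,
   and gate sets contain their children's sets: the circuit is
   cancellation-free. *)
Lemma circuit_of_set_program n (A : 'M['F_2]_n) ps :
  sp_valid (singletons n) ps ->
  (forall i, rowset A i \in sp_nodes (singletons n) ps) ->
  exists C : circuit n,
    [/\ computes C A, cancellation_free C & csize C = size ps].
Proof.
move=> V R; set E := sp_nodes (singletons n) ps.
pose C := Circuit (sp_gates (singletons n) ps) (fun i => index (rowset A i) E).
have sizeL : size (singletons n) = n by rewrite size_map size_enum_ord.
have G := sp_gatesP V; rewrite sizeL in G.
have kappaE u : kappa C u = vec_of_set (nth set0 E u).
  rewrite /kappa /=.
  have -> : [seq delta_mx 0%R i | i <- enum 'I_n] = map (@vec_of_set n) (singletons n).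
    by rewrite -[in RHS]map_comp; apply: eq_map => i /=; rewrite vec_of_set1.
  rewrite sp_node_vals //; case: (ltnP u (size E)) => Hu.
    by rewrite (nth_map set0).
  by rewrite !nth_default ?size_map // vec_of_set0.
have reaches_sub w u : reaches C w u -> nth set0 E w \subset nth set0 E u.
  elim => [w' u' [k [Hk -> Hw]] | w' | w1 w2 w3 _ H1 _ H2].
  - rewrite /= size_sp_gates in Hk; have [_ _ _ ->] := G k Hk.
    by case: Hw => ->; [apply: subsetUl | apply: subsetUr].
  - exact: subxx.
  - exact: subset_trans H1 H2.
exists C; split; last by rewrite /csize size_sp_gates.
- split; first split.
  + by move=> k; rewrite /= size_sp_gates => /G [].
  + by move=> i; rewrite /= size_sp_gates -[X in (_ < X + _)%N]sizeL -size_sp_nodes index_mem.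
  + move=> x i; rewrite eval_kappa kappaE nth_index // vec_of_rowset.
    by rewrite -row_mul mxE.
- move=> w u Hwu j; rewrite !kappaE => /eqP; rewrite vec_of_set_eq1 => Hj.
  by apply/eqP; rewrite vec_of_set_eq1 (subsetP (reaches_sub _ _ Hwu)).
Qed.

Lemma disjointUl (T : finType) (A B C : {set T}) :
  [disjoint A :|: B & C] = [disjoint A & C] && [disjoint B & C].
Proof. by rewrite -!setI_eq0 setIUl setU_eq0. Qed.

Section UnionChains.
Variable n : nat.
Implicit Types (T acc s : {set 'I_n}) (L ss : seq {set 'I_n}).
Notation program := (seq ({set 'I_n} * {set 'I_n})).
Notation pairwise_disjoint := (pairwise (fun a b : {set 'I_n} => [disjoint a & b])).

Fixpoint union_chain acc ss : program :=
  if ss is s :: ss' then (acc, s) :: union_chain (acc :|: s) ss' else [::].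

Definition union_seq ss : program :=
  if ss is s :: ss' then union_chain s ss' else [::].

Lemma size_union_seq ss : size (union_seq ss) = (size ss).-1.
Proof.
case: ss => [|s ss] //=.
by elim: ss s => [|t ss IH] s //=; rewrite IH.
Qed.

Lemma union_chain_mem L acc ss : acc \in L ->
  acc :|: \bigcup_(s <- ss) s \in sp_nodes L (union_chain acc ss).
Proof.
elim: ss acc L => [|s ss IH] acc L /= H; first by rewrite big_nil setU0.
by rewrite big_cons setUA; apply: IH; rewrite mem_rcons mem_head.
Qed.

Lemma union_seq_mem L s ss : s \in L ->
  \bigcup_(t <- s :: ss) t \in sp_nodes L (union_seq (s :: ss)).
Proof. by move=> H; rewrite big_cons; apply: union_chain_mem. Qed.

Lemma union_chain_valid L acc ss : acc \in L ->
  (forall s, s \in ss -> [/\ s \in L, s != set0 & [disjoint acc & s]]) ->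
  pairwise_disjoint ss -> sp_valid L (union_chain acc ss).
Proof.
elim: ss acc L => [|s ss IH] acc L //= HA Hs /andP[/allP Hall Hpw].
have [h1 h2 h3] := Hs s (mem_head _ _).
split => //=.
- by apply: contra h2 => /eqP E; move: h3; rewrite E -setI_eq0 setIid.
- apply: IH => //; first by rewrite mem_rcons mem_head.
  move=> t Ht; have [g1 g2 g3] := Hs t (mem_behead (s := s :: ss) Ht).
  by rewrite mem_rcons in_cons g1 orbT disjointUl g3 Hall.
Qed.

Lemma union_seq_valid L ss :
  (forall s, s \in ss -> s \in L /\ s != set0) ->
  pairwise_disjoint ss -> sp_valid L (union_seq ss).
Proof.
case: ss => [|s ss] //= Hs /andP[/allP Hall Hpw].
apply: union_chain_valid => //; first by case: (Hs s (mem_head _ _)).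
move=> t Ht; have [g1 g2] := Hs t (mem_behead (s := s :: ss) Ht).
by split => //; apply: Hall.
Qed.

Lemma sp_valid_flatten (I : Type) (f : I -> program) L0 xs :
  (forall x L, {subset L0 <= L} -> sp_valid L (f x)) ->
  forall L, {subset L0 <= L} -> sp_valid L (flatten (map f xs)).
Proof.
move=> Hf; elim: xs => [|x xs IH] L HL //=.
apply: sp_valid_cat; first exact: Hf.
by apply: IH => T HT; apply/mem_sp_nodes/HL.
Qed.

Lemma mem_sp_nodes_flatten (I : eqType) (f : I -> program) L0 xs x T :
  (forall L, {subset L0 <= L} -> T \in sp_nodes L (f x)) -> x \in xs ->
  forall L, {subset L0 <= L} -> T \in sp_nodes L (flatten (map f xs)).
Proof.
move=> Hf; elim: xs => [|y xs IH] //= Hx L HL.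
rewrite sp_nodes_cat; rewrite in_cons in Hx; case/orP: Hx => [/eqP <-|Hx].
  by apply/mem_sp_nodes/Hf.
by apply: IH => // U HU; apply/mem_sp_nodes/HL.
Qed.

End UnionChains.

Lemma size_flatten_map_leq (I : eqType) (J : Type) (f : I -> seq J) xs c :
  (forall x, x \in xs -> size (f x) <= c) -> size (flatten (map f xs)) <= size xs * c.
Proof.
elim: xs => [|x xs IH] //= Hf.
rewrite size_cat mulSn leq_add ?Hf ?mem_head // IH // => y Hy.
by apply: Hf; rewrite in_cons Hy orbT.
Qed.

Section Lupanov.
Variables n k : nat.
Hypothesis k_gt0 : 0 < k.
Notation m := (n %/ k).+1.
Implicit Types (T : {set 'I_n}) (L : seq {set 'I_n}) (A : 'M['F_2]_n).

Definition block (b : 'I_m) : {set 'I_n} := [set j : 'I_n | j %/ k == b].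
Definition block_of (j : 'I_n) : 'I_m := inord (j %/ k).

Lemma mem_block_of j : j \in block (block_of j).
Proof. by rewrite inE inordK // ltnS leq_div2r // ltnW. Qed.

Lemma block_disjoint b b' : b != b' -> [disjoint block b & block b'].
Proof.
move=> bb'; rewrite -setI_eq0; apply/eqP/setP => j; rewrite !inE.
by apply/negP => /andP[/eqP h1 /eqP h2]; move: bb'; rewrite -val_eqE /= -h1 h2 eqxx.
Qed.

Lemma card_block b : #|block b| <= k.
Proof.
pose f (j : 'I_n) := Ordinal (ltn_pmod j k_gt0).
rewrite -(card_in_imset (f := f)); first by rewrite -[leqRHS]card_ord max_card.
move=> j1 j2; rewrite !inE => /eqP h1 /eqP h2 /(congr1 val) /= h3.
by apply/val_inj; rewrite /= (divn_eq j1 k) (divn_eq j2 k) h1 h2 h3.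
Qed.

Definition block_subsets : seq {set 'I_n} :=
  flatten [seq enum (powerset (block b)) | b <- enum 'I_m].

Lemma mem_block_subsets T : (T \in block_subsets) = [exists b, T \subset block b].
Proof.
apply/flattenP/existsP => [[s /mapP [b _ ->]]|[b Hb]].
  by rewrite mem_enum powersetE => H; exists b.
exists (enum (powerset (block b))); first by apply: map_f; rewrite mem_enum.
by rewrite mem_enum powersetE.
Qed.

Lemma size_block_subsets : size block_subsets <= m * 2 ^ k.
Proof.
rewrite -[in leqRHS](size_enum_ord m); apply: size_flatten_map_leq => b _.
by rewrite -cardE card_powerset leq_pexp2l // card_block.
Qed.

Definition subset_program :=
  flatten [seq union_seq [seq [set e] | e <- enum T] | T <- block_subsets].

Lemma singleton_mem L e : {subset singletons n <= L} -> [set e] \in L.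
Proof. by move=> H; apply/H/map_f; rewrite mem_enum. Qed.

Lemma subset_program_valid : sp_valid (singletons n) subset_program.
Proof.
apply: (sp_valid_flatten (L0 := singletons n)) => // T L HL.
apply: union_seq_valid.
  move=> s /mapP [e _ ->]; split; first exact: singleton_mem.
  by apply/set0Pn; exists e; rewrite set11.
rewrite pairwise_map; have := enum_uniq (mem T); rewrite uniq_pairwise.
by apply: sub_pairwise => x y /= H; rewrite disjoints1 in_set1; apply: contra H => /eqP ->.
Qed.

Lemma bigcup_singletons T : \bigcup_(x <- [seq [set e] | e <- enum T]) x = T.
Proof.
rewrite big_map big_enum /=; apply/setP => j; apply/bigcupP/idP => [[e He]|Hj].
  by rewrite in_set1 => /eqP ->.
by exists j; rewrite ?set11.
Qed.

Lemma mem_subset_program T : T \in block_subsets -> T != set0 ->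
  T \in sp_nodes (singletons n) subset_program.
Proof.
move=> HT /set0Pn [e He].
apply: (mem_sp_nodes_flatten (L0 := singletons n) _ HT) => // L HL.
case E: (enum T) => [|e' es]; first by move: (mem_enum (mem T) e); rewrite E He.
rewrite -E -{1}(bigcup_singletons T) E /=; apply: union_seq_mem.
exact: singleton_mem.
Qed.

Lemma size_subset_program : size subset_program <= m * 2 ^ k * k.
Proof.
apply: leq_trans (size_flatten_map_leq (c := k) _) _.
  move=> T; rewrite size_union_seq size_map -cardE mem_block_subsets.
  case/existsP => b Hb; apply: leq_trans (leq_pred _) _.
  exact: leq_trans (subset_leq_card Hb) (card_block b).
by rewrite leq_mul2r size_block_subsets orbT.
Qed.

Definition row_pieces A i : seq {set 'I_n} :=
  [seq rowset A i :&: block b | b <- enum 'I_m & rowset A i :&: block b != set0].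

Definition row_program A :=
  flatten [seq union_seq (row_pieces A i) | i <- enum 'I_n].

Lemma row_pieces_block_subsets A i s :
  s \in row_pieces A i -> s \in block_subsets /\ s != set0.
Proof.
case/mapP => b; rewrite mem_filter => /andP [H _] ->; split => //.
by rewrite mem_block_subsets; apply/existsP; exists b; apply: subsetIr.
Qed.

Lemma row_program_valid A L :
  {subset sp_nodes (singletons n) subset_program <= L} -> sp_valid L (row_program A).
Proof.
apply: sp_valid_flatten => i L' HL'; apply: union_seq_valid.
  move=> s Hs; have [h1 h2] := row_pieces_block_subsets Hs; split => //.
  exact/HL'/mem_subset_program.
rewrite pairwise_map; apply: pairwise_filter.
have := enum_uniq (mem 'I_m); rewrite uniq_pairwise.
apply: sub_pairwise => x y /= H.
exact: disjointW (subsetIr _ _) (subsetIr _ _) (block_disjoint H).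
Qed.

Lemma mem_bigcup_seq (s : seq {set 'I_n}) j :
  (j \in \bigcup_(x <- s) x) = has (fun x : {set 'I_n} => j \in x) s.
Proof.
elim: s => [|x s IH]; first by rewrite big_nil in_set0.
by rewrite big_cons in_setU IH.
Qed.

Lemma bigcup_row_pieces A i : \bigcup_(s <- row_pieces A i) s = rowset A i.
Proof.
apply/setP => j; rewrite mem_bigcup_seq; apply/hasP/idP.
  by case=> s /mapP [b _ ->]; rewrite inE => /andP[].
move=> Hj; exists (rowset A i :&: block (block_of j)); last by rewrite inE Hj mem_block_of.
apply: map_f; rewrite mem_filter mem_enum andbT.
by apply/set0Pn; exists j; rewrite inE Hj mem_block_of.
Qed.

Lemma mem_row_program A i L : rowset A i != set0 ->
  {subset sp_nodes (singletons n) subset_program <= L} ->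
  rowset A i \in sp_nodes L (row_program A).
Proof.
move=> Hne; apply: (mem_sp_nodes_flatten (x := i)); last by rewrite mem_enum.
move=> L' HL'; case E: (row_pieces A i) => [|s ss].
  by move: Hne; rewrite -bigcup_row_pieces E big_nil eqxx.
rewrite -bigcup_row_pieces E; apply/union_seq_mem/HL'.
have [] : s \in block_subsets /\ s != set0.
  by apply: (@row_pieces_block_subsets A i); rewrite E mem_head.
exact: mem_subset_program.
Qed.

Lemma size_row_program A : size (row_program A) <= n * m.
Proof.
rewrite -[X in _ <= X * _](size_enum_ord n); apply: size_flatten_map_leq => i _.
rewrite size_union_seq size_map size_filter.
apply: leq_trans (leq_pred _) _; apply: leq_trans (count_size _ _) _.
by rewrite size_enum_ord.
Qed.

Lemma lupanov_circuit A : (forall i, rowset A i != set0) ->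
  exists C : circuit n, [/\ computes C A, cancellation_free C &
     csize C <= m * 2 ^ k * k + n * m].
Proof.
move=> Hne.
have V : sp_valid (singletons n) (subset_program ++ row_program A).
  by apply: sp_valid_cat; [exact: subset_program_valid | exact: row_program_valid].
have R i : rowset A i \in sp_nodes (singletons n) (subset_program ++ row_program A).
  by rewrite sp_nodes_cat; apply: mem_row_program.
have [C [h1 h2 h3]] := circuit_of_set_program V R.
exists C; split => //.
by rewrite h3 size_cat leq_add ?size_subset_program ?size_row_program.
Qed.

End Lupanov.

(* A circuit with at most s gates is determined by its number of gates, the
   children of (up to) s gates and the n output nodes, all nodes being
   below n + s. *)
Section CircuitCodes.
Variables n s : nat.

Definition code := ('I_s.+1 * {ffun 'I_s -> 'I_(n + s).+1 * 'I_(n + s).+1} *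
                    {ffun 'I_n -> 'I_(n + s).+1})%type.

Definition decode (c : code) : circuit n :=
  Circuit (take c.1.1 [seq ((c.1.2 i).1 : nat, (c.1.2 i).2 : nat) | i <- enum 'I_s])
          (fun i => c.2 i : nat).

Definition mx_of_circuit (C : circuit n) : 'M['F_2]_n :=
  \matrix_(i, j) kappa C (outs C i) 0%R j.

Lemma computes_mx_of_circuit C A : computes C A -> mx_of_circuit C = A.
Proof.
case=> _ CA; apply/matrixP => i j; rewrite mxE.
by have := CA (delta_mx j 0%R) i; rewrite eval_kappa -!colE !mxE.
Qed.

Lemma decode_small_circuit (D : circuit n) A : computes D A -> csize D <= s ->
  exists c : code, mx_of_circuit (decode c) = A.
Proof.
move=> DA; have [[Wg Wo] _] := DA.
case: D DA Wg Wo => g o DA Wg Wo; rewrite /csize /= in Wg Wo * => Hs.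
pose fg : {ffun 'I_s -> 'I_(n + s).+1 * 'I_(n + s).+1} :=
  [ffun i : 'I_s => (inord (nth (0, 0) g i).1, inord (nth (0, 0) g i).2)].
pose fo : {ffun 'I_n -> 'I_(n + s).+1} := [ffun i => inord (o i)].
exists (inord (size g), fg, fo).
have node_lt u : u < n + size g -> u < (n + s).+1.
  by move=> Hu; rewrite ltnS (leq_trans (ltnW Hu)) // leq_add2l.
have Eg : gates (decode (inord (size g), fg, fo)) = g.
  have Hsz : size [seq ((fg i).1 : nat, (fg i).2 : nat) | i <- enum 'I_s] = s.
    by rewrite size_map size_enum_ord.
  rewrite /= inordK ?ltnS //; apply: (@eq_from_nth _ (0, 0)) => [|i].
    by rewrite size_takel // Hsz.
  rewrite size_takel ?Hsz // => Hi; have His : i < s by apply: leq_trans Hs.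
  rewrite nth_take // (nth_map (Ordinal His)) ?size_enum_ord //.
  have -> : nth (Ordinal His) (enum 'I_s) i = Ordinal His.
    by apply: val_inj; rewrite /= nth_enum_ord.
  have [h1 h2 _] := Wg i Hi.
  have lt_i u : u < n + i -> u < (n + s).+1.
    by move=> Hu; apply: node_lt; rewrite (leq_trans Hu) // leq_add2l ltnW.
  by rewrite /fg ffunE /= !inordK ?lt_i //; case: (nth _ g i).
rewrite -(computes_mx_of_circuit DA); apply/matrixP => i j; rewrite !mxE.
by rewrite /kappa Eg /= /fo ffunE inordK ?node_lt.
Qed.

Lemma card_code :
  #|{: code}| = s.+1 * ((n + s).+1 * (n + s).+1) ^ s * (n + s).+1 ^ n.
Proof. by rewrite !card_prod !card_ffun !card_prod !card_ord. Qed.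

End CircuitCodes.

Lemma card_F2 : #|'F_2| = 2.
Proof. by rewrite card_Fp. Qed.

Section ZeroRows.
Variable n : nat.
Local Open Scope ring_scope.

Definition zero_row_mx : {set 'M['F_2]_n} := [set A | [exists i, row i A == 0]].

(* Adding an arbitrary row at the first zero row is injective. *)
Lemma card_zero_row_mx : (#|zero_row_mx| * 2 ^ n <= n.+1 * 2 ^ (n * n))%N.
Proof.
pose put (i : 'I_n) (v : 'rV['F_2]_n) : 'M['F_2]_n :=
  \matrix_(r, j) (if r == i then v 0 j else 0).
pose H (Av : 'M['F_2]_n * 'rV['F_2]_n) :=
  let p := [pick i | row i Av.1 == 0] in
  (p, if p is Some i then Av.1 + put i Av.2 else Av.1).
have -> : (2 ^ n)%N = #|[set: 'rV['F_2]_n]| by rewrite cardsT card_mx card_F2 mul1n.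
rewrite -cardsX -(@card_in_imset _ _ H).
  apply: leq_trans (max_card _) _.
  by rewrite card_prod card_option card_ord card_mx card_F2.
move=> [A v] [A' v']; rewrite !inE /= => /andP [/existsP [j0 Hj0] _] /andP [/existsP [j1 Hj1] _].
rewrite /H /=; case: pickP => [i Hi|/(_ j0)]; last by rewrite Hj0.
case: pickP => [i' Hi'|/(_ j1)]; last by rewrite Hj1.
case=> Eii E; subst i'.
have Ev : v = v'.
  apply/rowP => j; move/matrixP: E => /(_ i j); rewrite !mxE eqxx.
  move/eqP: Hi => /matrixP /(_ 0 j); rewrite !mxE => ->.
  by move/eqP: Hi' => /matrixP /(_ 0 j); rewrite !mxE => ->; rewrite !add0r.
by move: E; rewrite -Ev => /addIr ->.
Qed.

End ZeroRows.

Lemma sqr_leq_exp2 j : j * j <= 2 ^ j + 9.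
Proof.
have big i : 4 <= i -> i * i <= 2 ^ i.
  elim: i => [|i IH] // Hi.
  case: (ltngtP i 3) => Hi3; [lia | | by rewrite Hi3].
  by have := IH Hi3; rewrite expnS; nia.
by case: (leqP 4 j) => Hj; [have := big j Hj; lia | nia].
Qed.

Lemma trunc_log2_facts n : 1000 <= n ->
  let L := trunc_log 2 n in
  [/\ 2 ^ L <= n, n < 2 ^ L.+1, L * L <= n + 9 & 2 <= L].
Proof.
move=> Hn L.
have h1 : 2 ^ L <= n by apply: trunc_logP; lia.
split => //; first exact: trunc_log_ltn.
  by have := sqr_leq_exp2 L; lia.
by rewrite -[2](@trunc_expnK 2 2) // leq_trunc_log //; lia.
Qed.

(* With k = L/2 columns per block, the Lupanov circuit has O(n^2/L) gates. *)
Lemma lupanov_size_le n L : 1000 <= n -> 2 ^ L <= n -> 2 <= L ->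
  (n %/ (L %/ 2)).+1 * 2 ^ (L %/ 2) * (L %/ 2) + n * (n %/ (L %/ 2)).+1
    < 72 * (n * n %/ (8 * L.+1)).+1.
Proof.
move=> Hn h1 hL; set k := L %/ 2; set s := n * n %/ _.
have Lk : L = k * 2 + L %% 2 := divn_eq L 2.
have m2 : L %% 2 < 2 := ltn_pmod L (isT : 0 < 2).
have k1 : 1 <= k by lia.
have P2 : 2 ^ k * 2 ^ k <= n.
  by rewrite -expnD; apply: leq_trans h1; rewrite leq_pexp2l //; lia.
have kP : k < 2 ^ k := ltn_expl k (isT : 1 < 2).
have ak : n %/ k * k <= n := leq_trunc_div n k.
have ce : n * n < s.+1 * (8 * L.+1) := ltn_ceil _ (isT : 0 < 8 * L.+1).
have Ln : L < n by apply: leq_trans h1; apply: ltn_expl.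
move: P2 kP ak ce; set a := n %/ k; set P := 2 ^ k => P2 kP ak ce.
have kn : k <= n by lia.
have t1 : a.+1 * k <= 2 * n by rewrite mulSn; lia.
have t2 : P * L.+1 <= 2 * n.
  apply: leq_trans (leq_mul (leqnn P) (_ : L.+1 <= 2 * P)) _; first lia.
  by rewrite mulnCA; lia.
have t3 : a.+1 * P * k * L.+1 <= 4 * (n * n).
  have := leq_mul t1 t2.
  have -> : a.+1 * k * (P * L.+1) = a.+1 * P * k * L.+1.
    by rewrite mulnAC -!mulnA (mulnC k).
  lia.
have t4 : a * L.+1 <= 4 * n.
  apply: leq_trans (leq_mul (leqnn a) (_ : L.+1 <= 4 * k)) _; first lia.
  by rewrite mulnCA; lia.
have t5 : n * a.+1 * L.+1 <= 5 * (n * n).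
  rewrite -mulnA mulSn mulnDr.
  by have := leq_mul (leqnn n) t4; have := leq_mul (leqnn n) Ln; nia.
have t6 : (a.+1 * P * k + n * a.+1) * L.+1 < 72 * s.+1 * L.+1.
  by rewrite mulnDl -(mulnA 72) (mulnC 8) in ce *; lia.
by rewrite ltn_pmul2r in t6.
Qed.

(* Each of the 1 + 2s + n coordinates of a code is below 2^(2L+4), and
   2^n more fit into the remaining n^2 bits. *)
Lemma code_bits_le n L s : 1000 <= n -> 2 <= L -> L * L <= n + 9 ->
  s * (8 * L.+1) <= n * n -> (2 * L + 4) * (1 + 2 * s + n) + n <= n * n.
Proof.
move=> Hn hL hLL hs.
have hL16 : 16 * L + 36 <= n by nia.
have e1 : (2 * L + 4) * (2 * s) * 4 <= 3 * (n * n) by nia.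
have e2 : 4 * ((2 * L + 4) * (1 + n) + n) <= n * n.
  by have := leq_mul hL16 (leqnn n); nia.
nia.
Qed.

Definition small_size n := n * n %/ (8 * (trunc_log 2 n).+1).

Lemma card_code_small n : 1000 <= n ->
  #|{: code n (small_size n)}| * 2 ^ n <= 2 ^ (n * n).
Proof.
move=> Hn; rewrite card_code /small_size.
have [_ h2 hLL hL] := trunc_log2_facts Hn.
move: h2 hLL hL; set L := trunc_log 2 n => h2 hLL hL.
set s := n * n %/ _; have hs : s * (8 * L.+1) <= n * n := leq_divM _ _.
clearbody s; set B := (n + s).+1.
have hBdef : B = (n + s).+1 by [].
clearbody B.
have hnn : n * n <= 2 ^ (2 * L + 2).
  have := leq_mul (ltnW h2) (ltnW h2); rewrite -expnD.
  by have -> : L.+1 + L.+1 = 2 * L + 2 by lia.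
have hB : B <= 2 ^ (2 * L + 4).
  have -> : 2 ^ (2 * L + 4) = 4 * 2 ^ (2 * L + 2).
    by rewrite (_ : 2 * L + 4 = 2 + (2 * L + 2)) ?expnD //; lia.
  rewrite hBdef; nia.
have hsB : s.+1 <= B by rewrite hBdef; lia.
apply: leq_trans (_ : B ^ (1 + 2 * s + n) * 2 ^ n <= _).
  rewrite leq_mul2r; apply/orP; right.
  rewrite !expnD expn1 expn0 muln1 -expnMn; apply: leq_mul => //; exact: leq_mul.
apply: leq_trans (_ : 2 ^ ((2 * L + 4) * (1 + 2 * s + n)) * 2 ^ n <= _).
  by rewrite leq_mul2r expnM leq_exp2r ?hB ?orbT //; lia.
by rewrite -expnD leq_pexp2l // code_bits_le.
Qed.

Definition bad_mx n : {set 'M['F_2]_n} :=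
  zero_row_mx n :|: [set mx_of_circuit (decode c) | c : code n (small_size n)].

Lemma ratio_at_most_72 n (A : 'M['F_2]_n) :
  1000 <= n -> A \notin bad_mx n -> ratio_at_most 72 A.
Proof.
move=> Hn; rewrite !inE negb_or => /andP [HZ HB].
have [h1 _ _ hL] := trunc_log2_facts Hn.
have rows_nonzero i : rowset A i != set0.
  apply: contra HZ => /eqP E; apply/existsP; exists i.
  by rewrite -vec_of_rowset E vec_of_set0.
have k_gt0 : 0 < trunc_log 2 n %/ 2 by rewrite divn_gt0.
have [C [CA Ccf Csize]] := lupanov_circuit k_gt0 rows_nonzero.
exists C; split => // D DA.
have Dsize : small_size n < csize D.
  rewrite ltnNge; apply/negP => Ds; have [c Ec] := decode_small_circuit DA Ds.
  by move: HB; rewrite -Ec imset_f.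
apply: leq_trans Csize _; apply: leq_trans (ltnW (lupanov_size_le Hn h1 hL)) _.
by rewrite leq_mul2l Dsize orbT.
Qed.

Lemma card_bad_mx n M : 1000 <= n -> M + 3 <= n ->
  #|bad_mx n| * M <= #|{: 'M['F_2]_n}|.
Proof.
move=> Hn HM; rewrite card_mx card_F2.
have cZ := card_zero_row_mx n.
have cC := card_code_small Hn.
have cI : #|[set mx_of_circuit (decode c) | c : code n (small_size n)]| <=
          #|{: code n (small_size n)}| := leq_imset_card _ _.
have cU : #|bad_mx n| <= #|zero_row_mx n| + #|{: code n (small_size n)}|.
  by rewrite cardsU (leq_trans (leq_subr _ _)) // leq_add2l.
have cB : #|bad_mx n| * 2 ^ n <= (n + 2) * 2 ^ (n * n).
  by apply: leq_trans (leq_mul cU (leqnn _)) _; nia.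
have e1 : (n + 2) * M <= 2 ^ n by have := sqr_leq_exp2 n; nia.
by have := leq_mul (leqnn #|bad_mx n|) e1; nia.
Qed.

Local Open Scope ring_scope.

Lemma one_sub_le_ratio (R : realFieldType) (eps : R) (X M Q : nat) :
  0 < eps -> eps^-1 < M%:R -> (X * M <= Q)%N -> (0 < Q)%N ->
  1 - eps <= (Q - X)%:R / Q%:R.
Proof.
move=> eps0 HM XM Q0.
have M0 : (0 < M)%N by rewrite lt0n; apply: contraTneq HM => ->; rewrite -leNgt invr_ge0 ltW.
rewrite ler_pdivlMr ?ltr0n // natrB; last by apply: leq_trans XM; rewrite leq_pmulr.
have XMr : X%:R * M%:R <= Q%:R :> R by rewrite -natrM ler_nat.
have epsM : 1 < eps * M%:R by rewrite -(ltr_pM2l eps0) mulfV ?gt_eqF in HM.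
have X0 : 0 <= X%:R :> R by [].
nra.
Qed.

Theorem theorem3 :
  exists c : nat, forall eps : rat, 0 < eps ->
    exists N : nat, forall n : nat, (N <= n)%N ->
      exists S : {set 'M['F_2]_n},
        (forall A, A \in S -> ratio_at_most c A) /\
        1 - eps <= (#|S|%:R / #|{: 'M['F_2]_n}|%:R : rat).
Proof.
exists 72%N => eps eps0.
set M := Num.Def.archi_bound eps^-1.
have HM : eps^-1 < M%:R by apply: archi_boundP; rewrite invr_ge0 ltW.
exists (maxn 1000 (M + 3)) => n; rewrite geq_max => /andP [Hn HnM].
exists (~: bad_mx n); split => [A|]; first by rewrite inE; apply: ratio_at_most_72.
have -> : #|~: bad_mx n| = (#|{: 'M['F_2]_n}| - #|bad_mx n|)%N.
  by rewrite -(cardsC (bad_mx n)) addKn.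
apply: one_sub_le_ratio eps0 HM (card_bad_mx Hn HnM) _.
by rewrite card_mx card_F2 expn_gt0.
Qed.
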